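(* Fix $C\neq1$ and fix $\epsilon\in(0,1)$ and $\omega>0$ such that $\delta_0=\delta(C)-C\epsilon-\omega>0$ (note $\delta_2=\delta(C)-\log(1-\epsilon)+\omega>0$ automatically). There is a positive constant $N$ such that for all $n\ge N$, all $1\le i\le n$ and all integers $1\le r\le\epsilon n$, \[ \mathbb{P}(\#\mathcal{E}_i=r)\le\frac{T_re^{-r}}{C(r-1)!}e^{-\delta_0 r} \] and \[ \mathbb{P}(\#\mathcal{E}_i=r)\ge\frac{1}{C(1-\epsilon)}\frac{T_re^{-r}}{(r-1)!}e^{-\delta_2 r}e^{-2\epsilon+\frac{2\omega}{3}}. \]
   Context: Let $C>0$ be a constant and $(\alpha_n)_{n\ge1}$ a sequence of nonnegative reals with $\alpha_n\to0$. For each $n$, consider the complete graph $K_n$ on vertex set $\{1,\dots,n\}$; each edge $e$ of $K_n$ is independently open with probability $p_n(e)$ and closed otherwise, where $\frac{C-\alpha_n}{n}\le p_n(e)\le\frac{C+\alpha_n}{n}$ for every edge $e$. Let $G$ be the resulting random graph of open edges, with probability measure $\mathbb{P}$. For a vertex $i$, $\mathcal{E}_i$ denotes the open component of $G$ containing $i$ (the set of vertices joined to $i$ by a path of open edges, together with $i$ itself), and $\#\mathcal{E}_i$ its number of vertices. $\delta(C)=C-1-\log C$. $T_1=1$ and for $r\ge2$, $T_r$ is the number of labelled trees on $r$ vertices. *)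

From HB Require Import structures.
From mathcomp Require Import all_boot all_order all_algebra.
From mathcomp Require Import all_classical all_reals all_analysis.
Set Implicit Arguments. Unset Strict Implicit. Unset Printing Implicit Defensive.
Import Order.TTheory GRing.Theory Num.Theory.
Local Open Scope ring_scope.

(* Edges of the complete graph K_n on vertex set 'I_n (vertices 0..n-1):
   unordered pairs {x,y}, represented as ordered pairs (x,y) with x < y. *)
Definition edge (n : nat) : finType := {x : 'I_n * 'I_n | (x.1 < x.2)%N}.

Definition adj (n : nat) (w : {set edge n}) : rel 'I_n :=
  fun x y => [exists e in w,
    (((val e).1 == x) && ((val e).2 == y)) || (((val e).1 == y) && ((val e).2 == x))].

(* open component of vertex i (includes i itself, connect is reflexive) *)
Definition comp (n : nat) (w : {set edge n}) (i : 'I_n) : {set 'I_n} :=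
  [set j | connect (adj w) i j].

(* probability of the configuration w (w = set of open edges) when edge e is
   independently open with probability p e *)
Definition weight (R : realType) (n : nat) (p : edge n -> R) (w : {set edge n}) : R :=
  (\prod_(e in w) p e) * (\prod_(e in ~: w) (1 - p e)).

Definition prob_comp_size (R : realType) (n : nat) (p : edge n -> R) (i : 'I_n) (r : nat) : R :=
  \sum_(w : {set edge n} | #|comp w i| == r) weight p w.

(* a (spanning) tree on 'I_r: connected, and acyclic (every edge is a bridge,
   i.e. no edge lies on a cycle) *)
Definition is_tree (r : nat) (w : {set edge r}) : bool :=
  [forall x : 'I_r, forall y : 'I_r, connect (adj w) x y] &&
  [forall e in w, ~~ connect (adj (w :\ e)) (val e).1 (val e).2].

Definition T (r : nat) : nat := #|[set w : {set edge r} | is_tree w]|.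

Definition delta (R : realType) (C : R) : R := C - 1 - ln C.

(* Fix S containing i with #|S| = r.  The component of i is S only if the
   edges of some spanning tree of S are open and the r(n-r) or more edges
   leaving S are closed; conversely it is S as soon as the edges of a tree t
   on S are open and every other edge meeting S is closed, and these events
   are disjoint for distinct (S, t).  Summing over the 'C(n-1, r-1) sets S and
   the T_r trees on each, with (C - alpha_n)/n <= p <= (C + alpha_n)/n,
   squeezes P(#E_i = r) between
     'C(n-1, r-1) T_r ((C - alpha_n)/n)^(r-1) (1 - (C + alpha_n)/n)^(rn)   and
     'C(n-1, r-1) T_r ((C + alpha_n)/n)^(r-1) (1 - (C - alpha_n)/n)^(r(n-r)).
   The bounds e^(-x-2x^2) <= 1 - x <= e^(-x) and r <= eps n turn these into
   the stated exponentials once alpha_n is small and n is large. *)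

From Pilot Require Import Defs.
From HB Require Import structures.
From mathcomp Require Import all_boot all_order all_algebra.
From mathcomp Require Import all_classical all_reals all_analysis.
From mathcomp Require Import lra ring zify.
(* Re-imported so that [comp], [subsetP], [setP], [set0], ... denote the
   component of a vertex and the finset notions, not their homonyms from
   ssrfun and classical_sets. *)
From mathcomp Require Import fintype finset.
Import Pilot.Defs.
Import Order.TTheory GRing.Theory Num.Theory.
Import numFieldNormedType.Exports.

Set Implicit Arguments.
Unset Strict Implicit.
Unset Printing Implicit Defensive.

(** * Connectivity in graphs on ['I_n] *)

Lemma connect_ind (T : finType) (e : rel T) (P : T -> Prop) x :
  P x -> (forall y z, P y -> e y z -> P z) -> forall y, connect e x y -> P y.
Proof.
move=> Px Pe y /connectP[s]; elim: s x Px => [|z s IHs] x Px /=; first by move=> _ ->.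
by case/andP=> exz ps; apply: IHs ps; apply: Pe exz.
Qed.

Lemma connect_homo (T T' : finType) (e : rel T) (e' : rel T') (f : T -> T') :
  (forall x y, e x y -> e' (f x) (f y)) ->
  forall x y, connect e x y -> connect e' (f x) (f y).
Proof.
move=> fe x; apply: connect_ind => [|y z cxy eyz]; first exact: connect0.
exact: connect_trans cxy (connect1 (fe _ _ eyz)).
Qed.

Section Edges.
Variable n : nat.
Implicit Types (w t : {set edge n}) (x y z : 'I_n) (e f : edge n).

Definition end1 e : 'I_n := (val e).1.
Definition end2 e : 'I_n := (val e).2.

Definition joins e x y :=
  ((end1 e == x) && (end2 e == y)) || ((end1 e == y) && (end2 e == x)).

Definition acyclic w := [forall e in w, ~~ connect (adj (w :\ e)) (end1 e) (end2 e)].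

Definition ncomp w := #|[set comp w x | x : 'I_n]|.

Lemma joinsC e x y : joins e x y = joins e y x.
Proof. by rewrite /joins orbC. Qed.

Lemma joins_ends e : joins e (end1 e) (end2 e).
Proof. by rewrite /joins !eqxx. Qed.

Lemma joinsP e x y : joins e x y ->
  (x == end1 e) && (y == end2 e) || (x == end2 e) && (y == end1 e).
Proof. by case/orP=> /andP[/eqP-> /eqP->]; rewrite !eqxx ?orbT. Qed.

Lemma end1_neq_end2 e : end1 e != end2 e.
Proof. by rewrite neq_ltn (valP e). Qed.

Lemma adjP w x y : reflect (exists2 e, e \in w & joins e x y) (adj w x y).
Proof.
by apply: (iffP existsP) => [[e /andP[]]|[e ew exy]]; exists e; rewrite ?ew.
Qed.

Lemma adjC w : symmetric (adj w).
Proof. by move=> x y; apply/adjP/adjP => -[e ew exy]; exists e; rewrite // joinsC. Qed.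

Lemma connectC w x y : connect (adj w) x y = connect (adj w) y x.
Proof. exact/sym_connect_sym/adjC. Qed.

Lemma adj_ends w e : e \in w -> adj w (end1 e) (end2 e).
Proof. by move=> ew; apply/adjP; exists e; rewrite ?joins_ends. Qed.

Lemma connect_joins w e x y : joins e x y ->
  connect (adj w) (end1 e) (end2 e) = connect (adj w) x y.
Proof. by case/joinsP/orP=> /andP[/eqP-> /eqP->]; rewrite // connectC. Qed.

Lemma connect_subset w w' x y :
  w \subset w' -> connect (adj w) x y -> connect (adj w') x y.
Proof.
move=> sww'; apply: connect_sub => a b /adjP[e ew eab]; apply: connect1.
by apply/adjP; exists e; rewrite ?(subsetP sww').
Qed.

Lemma adj_setU1 e w x y : adj (e |: w) x y = joins e x y || adj w x y.
Proof.
apply/adjP/orP => [[f]|[exy|/adjP[f fw fxy]]].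
- by rewrite in_setU1 => /orP[/eqP->|fw fxy]; [left|right; apply/adjP; exists f].
- by exists e; rewrite ?setU11.
- by exists f; rewrite // in_setU1 fw orbT.
Qed.

Lemma connect_setU1 w e x y :
  connect (adj (e |: w)) x y = [|| connect (adj w) x y,
    connect (adj w) x (end1 e) && connect (adj w) (end2 e) y |
    connect (adj w) x (end2 e) && connect (adj w) (end1 e) y].
Proof.
set c := connect (adj w); apply/idP/idP.
  move: y; apply: connect_ind => [|y z]; first by rewrite /c connect0.
  rewrite adj_setU1 => cy /orP[/joinsP|ayz].
    case/orP=> /andP[/eqP Ey /eqP Ez]; subst y z; move: cy; rewrite /c !connect0 !andbT;
      by case: (connect _ x (end1 e)); case: (connect _ x (end2 e)); rewrite ?orbT.
  have cyz : c y z by apply: connect1.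
  case/or3P: cy => [cxy|/andP[-> c2y]|/andP[-> c1y]]; apply/or3P.
  - by constructor 1; apply: connect_trans cxy cyz.
  - by constructor 2; apply: connect_trans c2y cyz.
  - by constructor 3; apply: connect_trans c1y cyz.
have sw : w \subset e |: w by apply/subsetP => f fw; rewrite in_setU1 fw orbT.
have c12 : connect (adj (e |: w)) (end1 e) (end2 e) by apply/connect1/adj_ends/setU11.
have c21 : connect (adj (e |: w)) (end2 e) (end1 e) by rewrite connectC.
case/or3P => [|/andP[cx1 c2y]|/andP[cx2 c1y]]; first exact: connect_subset.
- exact: connect_trans (connect_subset sw cx1) (connect_trans c12 (connect_subset sw c2y)).
- exact: connect_trans (connect_subset sw cx2) (connect_trans c21 (connect_subset sw c1y)).
Qed.

Lemma connect_setD1 w e x y : connect (adj (w :\ e)) (end1 e) (end2 e) ->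
  connect (adj w) x y -> connect (adj (w :\ e)) x y.
Proof.
move=> c12; apply: connect_sub => a b /adjP[f fw fab].
have [fe|fe] := eqVneq f e; first by subst f; rewrite -(connect_joins _ fab).
by apply/connect1/adjP; exists f; rewrite // !inE fe.
Qed.

Lemma mem_comp w x y : (y \in comp w x) = connect (adj w) x y.
Proof. by rewrite inE. Qed.

Lemma comp_refl w x : x \in comp w x.
Proof. by rewrite mem_comp connect0. Qed.

Lemma eq_comp w x y : connect (adj w) x y -> comp w x = comp w y.
Proof.
move=> cxy; apply/setP => z; rewrite !mem_comp.
by apply/idP/idP; apply: connect_trans; rewrite // connectC.
Qed.

Lemma comp_closed w x y z : y \in comp w x -> adj w y z -> z \in comp w x.
Proof. by rewrite !mem_comp => cxy /connect1; apply: connect_trans. Qed.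

Lemma comp_set0 x : comp set0 x = [set x].
Proof.
apply/setP => y; rewrite mem_comp in_set1; apply/idP/idP => [|/eqP->]; last exact: connect0.
by move: y; apply: connect_ind => [|y z _ /adjP[f]]; rewrite ?inE.
Qed.

Lemma ncomp_set0 : ncomp set0 = n.
Proof.
rewrite /ncomp; under eq_imset do rewrite comp_set0.
by rewrite card_imset ?card_ord //; apply: set1_inj.
Qed.

Section Bridge.
Variables (w : {set edge n}) (e : edge n).
Hypothesis bridge : ~~ connect (adj w) (end1 e) (end2 e).

Let A := comp w (end1 e).
Let B := comp w (end2 e).

Lemma comp_setU1 x : comp (e |: w) x =
  if connect (adj w) x (end1 e) || connect (adj w) x (end2 e) then A :|: B else comp w x.
Proof.
have b12 := negbTE bridge; have b21 : connect (adj w) (end2 e) (end1 e) = false.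
  by rewrite connectC.
have reach y : connect (adj w) x y -> connect (adj w) x =1 connect (adj w) y.
  by move=> /eq_comp cxy z; rewrite -!mem_comp cxy.
apply/setP => z; rewrite mem_comp connect_setU1.
case: ifP => [/orP[/reach|/reach] cx|/norP[/negbTE-> /negbTE->]];
  rewrite ?in_setU !mem_comp; last by rewrite !orbF.
  by rewrite !cx connect0 b12 /= orbF.
by rewrite !cx connect0 b21 /= orbC.
Qed.

Lemma comps_setU1 :
  [set comp (e |: w) x | x : 'I_n] = (A :|: B) |: ([set comp w x | x : 'I_n] :\ A :\ B).
Proof.
apply/setP => X; rewrite in_setU1 !in_setD1; apply/imsetP/idP.
  case=> x _ ->; rewrite comp_setU1; case: ifP => [_|/norP[nx1 nx2]]; first by rewrite eqxx.
  apply/orP; right; rewrite imset_f // andbT; apply/andP; split; apply/eqP => eqA.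
    by move: nx2; rewrite -(mem_comp w) eqA comp_refl.
  by move: nx1; rewrite -(mem_comp w) eqA comp_refl.
case/orP => [/eqP->|/and3P[XB XA /imsetP[x _ eX]]]; last subst X.
  by exists (end1 e); rewrite // comp_setU1 connect0.
exists x; rewrite // comp_setU1.
by case: ifP => // /orP[/eq_comp|/eq_comp] cxe; rewrite cxe eqxx in XA XB.
Qed.

Lemma ncomp_setU1 : (ncomp (e |: w)).+1 = ncomp w.
Proof.
set K := [set comp w x | x : 'I_n].
have BA : B != A by apply: contraNneq bridge => eqBA; rewrite -mem_comp -/A -eqBA comp_refl.
have AB_new : A :|: B \notin K.
  apply/imsetP => -[x _ ABx].
  have cx1 : connect (adj w) x (end1 e) by rewrite -mem_comp -ABx in_setU comp_refl.
  have : end2 e \in comp w x by rewrite -ABx in_setU comp_refl orbT.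
  by rewrite (eq_comp cx1) mem_comp (negbTE bridge).
rewrite /ncomp comps_setU1 -/K cardsU1 !in_setD1 (negbTE AB_new) !andbF.
by rewrite [RHS](cardsD1 A) [#|K :\ A|](cardsD1 B) in_setD1 BA !imset_f.
Qed.

End Bridge.

Lemma acyclic_ncomp u : acyclic u -> forall t, t \subset u -> ncomp t + #|t| = n.
Proof.
move=> /forall_inP u_acyclic t; move card_t : #|t| => k.
elim: k t card_t => [|k IHk] t card_t tu.
  by move/eqP: card_t; rewrite cards_eq0 => /eqP->; rewrite ncomp_set0 addn0.
 have /set0Pn[e et] : t != set0 by rewrite -card_gt0 card_t.
have bridge : ~~ connect (adj (t :\ e)) (end1 e) (end2 e).
  apply: contra (u_acyclic e (subsetP tu e et)); apply: connect_subset.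
  exact: setSD.
rewrite -{1}(setD1K et) addnS -addSn ncomp_setU1 //.
apply: IHk; last exact: subset_trans (subD1set t e) tu.
by move: card_t; rewrite (cardsD1 e) et => -[].
Qed.

Lemma card_tree t : is_tree t -> #|t| = n.-1.
Proof.
case/andP=> /forallP t_conn t_acyclic; have := acyclic_ncomp t_acyclic (subxx t).
have [n0|n_gt0] := posnP n; first lia.
suff : ncomp t = 1 by lia.
apply/eqP/cards1P; exists setT; apply/setP => X; rewrite in_set1.
apply/imsetP/eqP => [[x _ ->]|->].
  by apply/setP => y; rewrite mem_comp in_setT (forallP (t_conn x)).
by exists (Ordinal n_gt0) => //; apply/setP => y; rewrite mem_comp in_setT (forallP (t_conn _)).
Qed.

Definition inner (S : {set 'I_n}) := [set e | (end1 e \in S) && (end2 e \in S)].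

Definition is_tree_on (S : {set 'I_n}) t :=
  [&& t \subset inner S, [forall x in S, forall y in S, connect (adj t) x y] & acyclic t].

End Edges.

Definition ord_pair m (a b : 'I_m) := if (a < b)%N then (a, b) else (b, a).

Lemma ord_pair_lt m (a b : 'I_m) : a != b -> ((ord_pair a b).1 < (ord_pair a b).2)%N.
Proof. by rewrite /ord_pair neq_ltn; case: ltnP. Qed.

Definition edge_of m (a b : 'I_m) (ab : a != b) : edge m := exist _ (ord_pair a b) (ord_pair_lt ab).

Lemma joins_edge_of m (a b : 'I_m) (ab : a != b) x y :
  joins (edge_of ab) x y = ((a == x) && (b == y)) || ((b == x) && (a == y)).
Proof.
rewrite /joins /end1 /end2 /= /ord_pair.
by case: ifP => _ /=; case: (a == x); case: (b == y); case: (b == x); case: (a == y).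
Qed.

Lemma edge_eq_joins m (f g : edge m) : joins f (end1 g) (end2 g) -> f = g.
Proof.
case/orP=> /andP[/eqP f1 /eqP f2].
  by apply: val_inj; move: f1 f2; rewrite /end1 /end2; case: (val f) => ? ? /= -> ->; case: (val g).
by have := valP f; rewrite -/(end1 f) -/(end2 f) f1 f2 ltnNge (ltnW (valP g)).
Qed.

Lemma imsetD1_inj (aT rT : finType) (f : aT -> rT) (A : {set aT}) x :
  injective f -> f @: (A :\ x) = f @: A :\ f x.
Proof.
move=> f_inj; apply/setP => y; rewrite in_setD1; apply/imsetP/andP.
  by case=> z; rewrite in_setD1 => /andP[zx zA] ->; rewrite (inj_eq f_inj) zx imset_f.
case=> yfx /imsetP[z zA yz]; exists z => //; rewrite in_setD1 zA andbT.
by apply: contraNneq yfx => <-; rewrite yz.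
Qed.

(** * Trees on a subset of the vertices *)

Section Relabel.
Variables (n r : nat) (S : {set 'I_n}) (card_S : #|S| = r) (i : 'I_n) (iS : i \in S).
Implicit Types (u : {set edge r}) (t : {set edge n}) (k : edge r).

Definition relabel (a : 'I_r) : 'I_n := enum_val (cast_ord (esym card_S) a).
(* [iS] only provides the default point required by [enum_rank_in]. *)
Definition unlabel (x : 'I_n) : 'I_r := cast_ord card_S (enum_rank_in iS x).

Lemma relabelK : cancel relabel unlabel.
Proof. by move=> a; apply: val_inj; rewrite /unlabel /relabel /= enum_valK_in. Qed.

Lemma unlabelK : {in S, cancel unlabel relabel}.
Proof. by move=> x xS; rewrite /relabel /unlabel cast_ordK enum_rankK_in. Qed.

Lemma relabel_mem a : relabel a \in S.
Proof. exact: enum_valP. Qed.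

Lemma relabel_inj : injective relabel.
Proof. exact: can_inj relabelK. Qed.

Lemma relabel_eq a x : x \in S -> (relabel a == x) = (a == unlabel x).
Proof. by move=> xS; rewrite -{1}(unlabelK xS) (inj_eq relabel_inj). Qed.

Lemma relabel_ends_neq k : relabel (end1 k) != relabel (end2 k).
Proof. by rewrite (inj_eq relabel_inj) end1_neq_end2. Qed.

Definition relabel_edge k : edge n := edge_of (relabel_ends_neq k).

Lemma joins_relabel_edge k x y : x \in S -> y \in S ->
  joins (relabel_edge k) x y = joins k (unlabel x) (unlabel y).
Proof. by move=> xS yS; rewrite joins_edge_of !relabel_eq // /joins [X in _ || X]andbC. Qed.

Lemma joins_relabel_edge_mem k x y : joins (relabel_edge k) x y -> (x \in S) && (y \in S).
Proof. by rewrite joins_edge_of => /orP[] /andP[/eqP<- /eqP<-]; rewrite !relabel_mem. Qed.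

Lemma joins_relabel_edge_ends k :
  joins (relabel_edge k) (relabel (end1 k)) (relabel (end2 k)).
Proof. by rewrite joins_relabel_edge ?relabel_mem // !relabelK joins_ends. Qed.

Lemma relabel_edge_inj : injective relabel_edge.
Proof.
move=> k k' kk'; apply: edge_eq_joins.
by have := joins_relabel_edge_ends k'; rewrite -kk' joins_relabel_edge ?relabel_mem // !relabelK.
Qed.

Lemma relabel_edge_inner : relabel_edge @: setT = inner S.
Proof.
apply/setP => e; rewrite inE; apply/imsetP/andP => [[k _ ->]|[e1S e2S]].
  exact/andP/joins_relabel_edge_mem/joins_ends.
have : unlabel (end1 e) != unlabel (end2 e).
  by rewrite -(inj_eq relabel_inj) !unlabelK ?end1_neq_end2.
move=> ne; exists (edge_of ne) => //; apply/esym/edge_eq_joins.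
by rewrite joins_relabel_edge // joins_edge_of !eqxx.
Qed.

Lemma adj_relabel u x y : adj (relabel_edge @: u) x y =
  [&& x \in S, y \in S & adj u (unlabel x) (unlabel y)].
Proof.
apply/adjP/and3P => [[e /imsetP[k ku ->] kxy]|[xS yS /adjP[k ku kxy]]].
  have /andP[xS yS] := joins_relabel_edge_mem kxy.
  by split=> //; apply/adjP; exists k; rewrite -?joins_relabel_edge.
by exists (relabel_edge k); rewrite ?imset_f ?joins_relabel_edge.
Qed.

Lemma connect_relabel u a b :
  connect (adj (relabel_edge @: u)) (relabel a) (relabel b) = connect (adj u) a b.
Proof.
apply/idP/idP => cab.
  rewrite -[a]relabelK -[b]relabelK; move: cab; apply: connect_homo => x y.
  by rewrite adj_relabel => /and3P[].
by apply: connect_homo cab => x y; rewrite adj_relabel !relabel_mem !relabelK.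
Qed.

Lemma is_tree_relabel u : is_tree u = is_tree_on S (relabel_edge @: u).
Proof.
have inner_u : relabel_edge @: u \subset inner S.
  by rewrite -relabel_edge_inner imsetS ?subsetT.
rewrite /is_tree /is_tree_on inner_u /=; congr andb.
  apply/forallP/forall_inP => [conn x xS|conn a].
    apply/forall_inP => y yS.
    by rewrite -(unlabelK xS) -(unlabelK yS) connect_relabel (forallP (conn _)).
  apply/forallP => b.
  by rewrite -connect_relabel (forall_inP (conn _ (relabel_mem _))) ?relabel_mem.
have bridge k : ~~ connect (adj (relabel_edge @: u :\ relabel_edge k))
    (end1 (relabel_edge k)) (end2 (relabel_edge k)) = ~~ connect (adj (u :\ k)) (end1 k) (end2 k).
  by rewrite -imsetD1_inj ?(connect_joins _ (joins_relabel_edge_ends k)) ?connect_relabel //;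
    apply: relabel_edge_inj.
apply/forall_inP/forall_inP => [acyc _ /imsetP[k ku ->]|acyc k ku]; first by rewrite bridge acyc.
by rewrite -bridge acyc ?imset_f.
Qed.

Lemma trees_on_relabel :
  [set t | is_tree_on S t] = (fun u => relabel_edge @: u) @: [set u | is_tree u].
Proof.
apply/setP => t; rewrite inE; apply/idP/imsetP => [t_tree|[u]]; last first.
  by rewrite inE is_tree_relabel => ? ->.
have t_inner : t \subset inner S by case/andP: t_tree.
have t_image : relabel_edge @: (relabel_edge @^-1: t) = t.
  apply/setP => e; apply/imsetP/idP => [[k]|et]; first by rewrite inE => kt ->.
  have /imsetP[k _ ek] : e \in relabel_edge @: setT by rewrite relabel_edge_inner (subsetP t_inner).
  by exists k; rewrite // inE -ek.
by exists (relabel_edge @^-1: t); rewrite // inE is_tree_relabel t_image.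
Qed.

Lemma card_trees_on : #|[set t | is_tree_on S t]| = T r.
Proof. by rewrite trees_on_relabel card_imset //; apply/imset_inj/relabel_edge_inj. Qed.

Lemma card_tree_on t : is_tree_on S t -> #|t| = r.-1.
Proof.
move=> t_tree; have : t \in [set t | is_tree_on S t] by rewrite inE.
rewrite trees_on_relabel => /imsetP[u]; rewrite inE => /card_tree <- ->.
by rewrite card_imset //; apply: relabel_edge_inj.
Qed.

End Relabel.

(** * Cuts and spanning trees *)

Section Cuts.
Variable n : nat.
Implicit Types (S : {set 'I_n}) (w t : {set edge n}) (i x y : 'I_n) (e f : edge n).

Definition boundary S := [set e | (end1 e \in S) != (end2 e \in S)].
Definition incident S := [set e | (end1 e \in S) || (end2 e \in S)].

Lemma inner_boundary_disjoint S : [disjoint inner S & boundary S].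
Proof. by apply/pred0P => e /=; rewrite !inE; case: (_ \in S); case: (_ \in S). Qed.

Definition orient S e : 'I_n * 'I_n :=
  if end1 e \in S then (end1 e, end2 e) else (end2 e, end1 e).

Lemma orient_inj S : injective (orient S).
Proof.
move=> e f eq_ef; apply: edge_eq_joins; move: eq_ef; rewrite /orient /joins.
by case: ifP; case: ifP => _ _ [-> ->]; rewrite !eqxx ?orbT.
Qed.

Lemma card_boundary S : (#|S| * (n - #|S|) <= #|boundary S|)%N.
Proof.
have -> : (n - #|S| = #|~: S|)%N by rewrite -{1}(card_ord n) -(cardsC S) addKn.
rewrite -cardsX -(card_imset _ (@orient_inj S)) subset_leq_card //.
apply/subsetP => -[x y]; rewrite inE /= in_setC => /andP[xS yS].
have xy : x != y by apply: contraNneq yS => <-.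
apply/imsetP; exists (edge_of xy); rewrite ?inE /orient /end1 /end2 /= /ord_pair;
  by case: (x < y)%N => /=; rewrite ?xS ?(negbTE yS).
Qed.

Lemma card_incident S : (#|incident S| <= #|S| * n)%N.
Proof.
rewrite -[X in (_ * X)%N]card_ord -cardsT -cardsX.
rewrite -(card_imset _ (@orient_inj S)) subset_leq_card //.
apply/subsetP => _ /imsetP[e + ->]; rewrite inE /orient.
by case: ifP => [e1S|/negbT e1S /=]; rewrite inE /= ?e1S // in_setT andbT.
Qed.

Lemma comp_boundary_disjoint w i : [disjoint w & boundary (comp w i)].
Proof.
apply/pred0P => e /=; apply/negbTE/negP => /andP[ew]; rewrite inE.
have a12 := adj_ends ew; have a21 : adj w (end2 e) (end1 e) by rewrite adjC.
by case: (boolP (end1 e \in _)) => c1; case: (boolP (end2 e \in _)) => c2 //=;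
  [move: c2; rewrite (comp_closed c1 a12) | move: c1; rewrite (comp_closed c2 a21)].
Qed.

Lemma comp_connect_inner w i x :
  x \in comp w i -> connect (adj (w :&: inner (comp w i))) i x.
Proof.
set S := comp w i; rewrite mem_comp.
suff /(_ x) h : forall y, connect (adj w) i y -> (y \in S) && connect (adj (w :&: inner S)) i y.
  by move=> /h /andP[].
apply: connect_ind => [|y z /andP[yS cy] ayz]; first by rewrite comp_refl connect0.
have zS : z \in S := comp_closed yS ayz.
rewrite zS; apply: connect_trans cy (connect1 _).
case/adjP: ayz => e ew eyz; apply/adjP; exists e => //.
by rewrite in_setI ew inE; case/joinsP/orP: eyz => /andP[/eqP<- /eqP<-]; rewrite yS zS.
Qed.

Lemma exists_spanning_tree w i : exists2 t, is_tree_on (comp w i) t & t \subset w.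
Proof.
set S := comp w i.
pose P t := (t \subset w :&: inner S) && [forall x in S, connect (adj t) i x].
have P0 : P (w :&: inner S).
  by rewrite /P subxx; apply/forall_inP => x; apply: comp_connect_inner.
(* A minimal such t is acyclic: an edge on a cycle could be removed. *)
case: (arg_minnP (fun t => #|t|) P0) => t /andP[tw ti] t_min.
exists t; last exact: subset_trans tw (subsetIl _ _).
apply/and3P; split; first exact: subset_trans tw (subsetIr _ _).
  apply/forall_inP => x xS; apply/forall_inP => y yS.
  by apply: connect_trans (forall_inP ti y yS); rewrite connectC (forall_inP ti x xS).
apply/forall_inP => e et; apply/negP => e_cycle.
have : P (t :\ e).
  rewrite /P (subset_trans (subD1set t e) tw); apply/forall_inP => x xS.
  exact: connect_setD1 e_cycle (forall_inP ti x xS).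
by move/t_min; rewrite (cardsD1 e t) et ltnn.
Qed.

Lemma isolated_tree_comp S t w i : i \in S -> is_tree_on S t -> t \subset w ->
  [disjoint w & (inner S :\: t) :|: boundary S] -> comp w i = S /\ w :&: inner S = t.
Proof.
move=> iS /and3P[t_inner /forall_inP t_conn _] tw /pred0P w_avoid.
have w_avoidP e : e \in w -> e \in (inner S :\: t) :|: boundary S -> False.
  by move=> ew eB; have := w_avoid e; rewrite /= ew eB.
split.
  apply/setP => x; rewrite mem_comp; apply/idP/idP => [|xS]; last first.
    exact: connect_subset tw (forall_inP (t_conn i iS) x xS).
  move: x; apply: connect_ind => // y z yS /adjP[e ew eyz].
  apply/negPn/negP => zS; apply: (w_avoidP e ew); rewrite in_setU; apply/orP; right; rewrite inE.
  by case/joinsP/orP: eyz => /andP[/eqP<- /eqP<-]; rewrite yS (negbTE zS).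
apply/setP => e; rewrite in_setI; apply/andP/idP => [[ew eS]|et].
  by apply/negPn/negP => ent; apply: (w_avoidP e ew); rewrite in_setU in_setD ent eS.
by rewrite (subsetP tw e et) (subsetP t_inner e et).
Qed.

Lemma card_sets_containing i r : (0 < r)%N ->
  #|[set S : {set 'I_n} | (i \in S) && (#|S| == r)]| = 'C(n.-1, r.-1).
Proof.
move=> r_gt0; rewrite -[n in n.-1]card_ord -(cardsC1 i) -cards_draws.
have notin_i (A : {set 'I_n}) : A \subset [set~ i] -> i \notin A.
  by move=> sA; apply/negP => /(subsetP sA); rewrite !inE eqxx.
rewrite -[RHS](card_in_imset (f := fun A => i |: A)); last first.
  move=> A B; rewrite !inE => /andP[/notin_i iA _] /andP[/notin_i iB _] AB.
  by rewrite -(setU1K iA) AB setU1K.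
apply: eq_card => S; rewrite inE; apply/andP/imsetP => [[iS /eqP card_S]|[A]].
  exists (S :\ i); last by rewrite setD1K.
  rewrite inE -card_S (cardsD1 i S) iS eqxx andbT.
  by apply/subsetP => x; rewrite !inE => /andP[].
rewrite inE => /andP[/notin_i iA /eqP card_A] ->.
by rewrite setU11 cardsU1 iA card_A add1n prednK.
Qed.

End Cuts.

(** * The law of the size of a component *)

Local Open Scope ring_scope.

Lemma ler_term_sum (R : numDomainType) (I : finType) (P : pred I) (F : I -> R) x :
  P x -> (forall y, P y -> 0 <= F y) -> F x <= \sum_(y | P y) F y.
Proof.
move=> Px F0; rewrite (bigD1 x) //= lerDl; apply: sumr_ge0 => y /andP[Py _]; exact: F0.
Qed.

Lemma sumr_le_sumT (R : numDomainType) (I : finType) (P : pred I) (F : I -> R) :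
  (forall y, 0 <= F y) -> \sum_(y | P y) F y <= \sum_y F y.
Proof. by move=> F0; rewrite [X in _ <= X](bigID P) /= lerDl sumr_ge0. Qed.

Section Weight.
Variables (R : realType) (n : nat) (p : edge n -> R).
Implicit Types (w A B : {set edge n}).

Lemma weightE w : weight p w = \prod_e (if e \in w then p e else 1 - p e).
Proof.
rewrite /weight [RHS](bigID (mem w)) /=; congr (_ * _).
  by apply: eq_big => [e|e ew]; rewrite ?inE ?ew.
by apply: eq_big => [e|e]; rewrite ?in_setC // => /negbTE ->.
Qed.

Lemma sum_weight_open_closed A B : [disjoint A & B] ->
  \sum_(w : {set edge n} | (A \subset w) && [disjoint w & B]) weight p w =
  (\prod_(e in A) p e) * \prod_(e in B) (1 - p e).
Proof.
move=> AB.
pose F e := if e \in B then 0 else p e; pose G e := if e \in A then 0 else 1 - p e.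
have -> : (\prod_(e in A) p e) * \prod_(e in B) (1 - p e) = \prod_e (F e + G e).
  rewrite [RHS](bigID (mem A)) /=; congr (_ * _).
    by apply: eq_bigr => e eA; rewrite /F /G eA (disjointFr AB eA) addr0.
  rewrite [LHS]big_mkcond [RHS]big_mkcond /=; apply: eq_bigr => e _.
  rewrite /F /G; case: (boolP (e \in A)) => [eA|_] /=; first by rewrite (disjointFr AB eA).
  by case: ifP => _; rewrite ?add0r // addrC subrK.
rewrite (bigA_distr 1 (@GRing.add R) F G) [LHS]big_mkcond /=; apply: eq_bigr => w _.
case: ifP => [/andP[Aw wB]|]; first rewrite weightE.
  apply: eq_bigr => e _; rewrite /F /G.
  case: ifP => [ew|/negbT ew]; first by rewrite (disjointFr wB ew).
  by rewrite (contraNF (subsetP Aw e) ew).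
move/negbT; rewrite negb_and => /orP[/subsetPn[e eA ew]|/pred0Pn[e /andP[ew eB]]];
  apply/esym/eqP; rewrite prodf_seq_eq0; apply/hasP; exists e; rewrite ?mem_index_enum //=.
- by rewrite (negbTE ew) /G eA.
- by rewrite (ew : e \in w) /F (eB : e \in B).
Qed.

Hypothesis p01 : forall e, 0 <= p e <= 1.

Lemma weight_ge0 w : 0 <= weight p w.
Proof.
by rewrite /weight mulr_ge0 // prodr_ge0 // => e _; have /andP[] := p01 e; rewrite // subr_ge0.
Qed.

End Weight.

Section ComponentBounds.
Variables (R : realType) (n : nat) (p : edge n -> R) (a b : R) (i : 'I_n) (r : nat).
Hypotheses (p_ab : forall e, a <= p e <= b) (a_ge0 : 0 <= a) (a_le_b : a <= b) (b_le1 : b <= 1).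
Hypothesis r_gt0 : (0 < r)%N.

Let sets_i := [set S : {set 'I_n} | (i \in S) && (#|S| == r)].
Let trees_on S := [set t : {set edge n} | is_tree_on S t].

Let p01 e : 0 <= p e <= 1.
Proof. by have /andP[ap pb] := p_ab e; rewrite (le_trans a_ge0 ap) (le_trans pb b_le1). Qed.

Lemma sum_trees_on_const (c : R) :
  \sum_(S in sets_i) \sum_(t in trees_on S) c = 'C(n.-1, r.-1)%:R * (T r)%:R * c.
Proof.
rewrite (eq_bigr (fun=> c *+ T r)) => [|S]; last first.
  by rewrite inE => /andP[iS /eqP card_S]; rewrite sumr_const (card_trees_on card_S iS).
by rewrite sumr_const card_sets_containing // -mulrnA -natrM mulr_natl mulnC.
Qed.

Lemma prob_comp_size_le_sum : prob_comp_size p i r <=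
  \sum_(S in sets_i) \sum_(t in trees_on S)
    \sum_(w : {set edge n} | (t \subset w) && [disjoint w & boundary S]) weight p w.
Proof.
pose X (S : {set 'I_n}) (t w : {set edge n}) :=
  if (t \subset w) && [disjoint w & boundary S] then weight p w else 0.
have X_ge0 S t w : 0 <= X S t w by rewrite /X; case: ifP => // _; apply: weight_ge0.
apply: (@le_trans _ _ (\sum_w \sum_(S in sets_i) \sum_(t in trees_on S) X S t w)).
  rewrite /prob_comp_size big_mkcond /=; apply: ler_sum => w _.
  case: ifP => [card_comp|_]; last by do 2!apply: sumr_ge0 => ? _.
  have [t t_tree tw] := exists_spanning_tree w i.
  have compS : comp w i \in sets_i by rewrite inE card_comp comp_refl.
  have tT : t \in trees_on (comp w i) by rewrite inE.
  apply: le_trans (ler_term_sum compS _) => [|S _]; last by apply: sumr_ge0.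
  by apply: le_trans (ler_term_sum tT _) => //; rewrite /X tw comp_boundary_disjoint.
rewrite exchange_big; apply: ler_sum => S _; rewrite exchange_big.
by apply: ler_sum => t _; rewrite [X in _ <= X]big_mkcond.
Qed.

Lemma sum_isolated_trees_le_prob :
  \sum_(S in sets_i) \sum_(t in trees_on S)
    \sum_(w : {set edge n} | (t \subset w) && [disjoint w & (inner S :\: t) :|: boundary S])
      weight p w
  <= prob_comp_size p i r.
Proof.
pose Y (S : {set 'I_n}) (t w : {set edge n}) :=
  if (t \subset w) && [disjoint w & (inner S :\: t) :|: boundary S] then weight p w else 0.
rewrite (eq_bigr (fun S => \sum_(t in trees_on S) \sum_w Y S t w)) => [|S _]; last first.
  by apply: eq_bigr => t _; rewrite big_mkcond.
under eq_bigr do rewrite exchange_big /=.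
rewrite exchange_big /prob_comp_size [X in _ <= X]big_mkcond /=; apply: ler_sum => w _.
set c := if _ then _ else _.
have c_ge0 : 0 <= c by rewrite /c; case: ifP => // _; apply: weight_ge0.
pose Z (S : {set 'I_n}) (t : {set edge n}) :=
  if S == comp w i then (if t == w :&: inner S then c else 0) else 0.
have Z_ge0 S t : 0 <= Z S t by rewrite /Z; case: ifP => //; case: ifP.
(* w determines S = comp w i and t = w :&: inner S, so it is counted at most once. *)
have YZ S t : S \in sets_i -> t \in trees_on S -> Y S t w <= Z S t.
  rewrite !inE => /andP[iS /eqP card_S] t_tree; rewrite /Y.
  case: ifP => [/andP[tw w_avoid]|_]; last exact: Z_ge0.
  rewrite /Z /c; have [-> ->] := isolated_tree_comp iS t_tree tw w_avoid.
  by rewrite !eqxx card_S eqxx.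
apply: (@le_trans _ _ (\sum_S \sum_t Z S t)).
  apply: le_trans (sumr_le_sumT _ _) => [|S]; last exact: sumr_ge0.
  apply: ler_sum => S SS; apply: le_trans (sumr_le_sumT _ _) => //.
  by apply: ler_sum => t tT; apply: YZ.
rewrite (bigD1 (comp w i)) //= [X in _ + X]big1 ?addr0 => [|S /negbTE Sw]; last first.
  by apply: big1 => t _; rewrite /Z Sw.
rewrite (bigD1 (w :&: inner (comp w i))) //= [X in _ + X]big1 ?addr0 => [|t /negbTE tw].
  by rewrite /Z !eqxx.
by rewrite /Z eqxx tw.
Qed.

Lemma prob_comp_size_le :
  prob_comp_size p i r <= 'C(n.-1, r.-1)%:R * (T r)%:R * (b ^+ r.-1 * (1 - a) ^+ (r * (n - r))).
Proof.
apply: le_trans prob_comp_size_le_sum _; rewrite -sum_trees_on_const.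
apply: ler_sum => S; rewrite inE => /andP[iS /eqP card_S].
apply: ler_sum => t; rewrite inE => t_tree; have /and3P[t_inner _ _] := t_tree.
rewrite sum_weight_open_closed ?(disjointWl t_inner (inner_boundary_disjoint S)) //.
have q_ge0 e : 0 <= 1 - p e by rewrite subr_ge0; have /andP[] := p01 e.
apply: ler_pM; do ?by apply: prodr_ge0 => e _; have /andP[] := p01 e.
  rewrite -(card_tree_on card_S iS t_tree) -prodr_const; apply: ler_prod => e _.
  by have /andP[_ ->] := p_ab e; have /andP[->] := p01 e.
apply: le_trans (_ : (1 - a) ^+ #|boundary S| <= _).
  by rewrite -prodr_const; apply: ler_prod => e _; have /andP[ap _] := p_ab e; rewrite q_ge0 lerB.
apply: ler_wiXn2l; rewrite ?subr_ge0 ?gerDl ?oppr_le0 ?(le_trans a_le_b b_le1) //.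
by rewrite -card_S card_boundary.
Qed.

Lemma prob_comp_size_ge :
  'C(n.-1, r.-1)%:R * (T r)%:R * (a ^+ r.-1 * (1 - b) ^+ (r * n)) <= prob_comp_size p i r.
Proof.
apply: le_trans sum_isolated_trees_le_prob; rewrite -sum_trees_on_const.
apply: ler_sum => S; rewrite inE => /andP[iS /eqP card_S].
apply: ler_sum => t; rewrite inE => t_tree; have /and3P[t_inner _ _] := t_tree.
rewrite sum_weight_open_closed; last first.
  rewrite disjoints_subset; apply/subsetP => e et; move: (subsetP t_inner e et).
  by rewrite !inE et => /andP[-> ->].
have b_le_q e : 1 - b <= 1 - p e by have /andP[_ pb] := p_ab e; rewrite lerB.
apply: ler_pM; rewrite ?exprn_ge0 ?subr_ge0 //.
  rewrite -(card_tree_on card_S iS t_tree) -prodr_const; apply: ler_prod => e _.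
  by rewrite a_ge0; have /andP[-> _] := p_ab e.
apply: le_trans (_ : (1 - b) ^+ #|(inner S :\: t) :|: boundary S| <= _).
  apply: ler_wiXn2l; rewrite ?subr_ge0 ?gerDl ?oppr_le0 ?(le_trans a_ge0 a_le_b) //.
  rewrite -card_S; apply: leq_trans (card_incident S); apply: subset_leq_card.
  by apply/subsetP => e; rewrite !inE => /orP[/and3P[_ -> //]|]; case: (_ \in S); case: (_ \in S).
by rewrite -prodr_const; apply: ler_prod => e _; rewrite b_le_q subr_ge0 b_le1.
Qed.

End ComponentBounds.

(** * Analytic estimates *)

Section Exponential.
Variable R : realType.
Implicit Types (x y : R) (k : nat).

Lemma pow_le_expR x y k : 0 < x -> 0 <= y -> (x + y) ^+ k <= x ^+ k * expR (k%:R * (y / x)).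
Proof.
move=> x_gt0 y_ge0; rewrite expRM_natl -exprMn.
apply: lerXn2r; rewrite ?nnegrE ?mulr_ge0 ?expR_ge0; try lra.
have -> : x + y = x * (1 + y / x) by field; rewrite gt_eqF.
by rewrite ler_wpM2l ?expR_ge1Dx //; lra.
Qed.

Lemma pow_1B_le_expR x k : x <= 1 -> (1 - x) ^+ k <= expR (- (k%:R * x)).
Proof.
move=> x_le1; rewrite -mulrN expRM_natl; apply: lerXn2r; rewrite ?nnegrE ?expR_ge0 ?subr_ge0 //.
by have := expR_ge1Dx (- x); rewrite addrC.
Qed.

Lemma expR_le_pow_1B x k : 0 <= x <= 1 / 2 -> expR (- (k%:R * (x + 2 * x ^+ 2))) <= (1 - x) ^+ k.
Proof.
move=> /andP[x_ge0 x_le]; rewrite -mulrN expRM_natl.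
apply: lerXn2r; rewrite ?nnegrE ?expR_ge0 ?subr_ge0; try lra.
have x_lt1 : 1 - x > 0 by lra.
have ge_inv : (1 - x)^-1 <= expR (x / (1 - x)).
  by apply: le_trans (expR_ge1Dx _); rewrite le_eqVlt; apply/orP; left; apply/eqP; field; lra.
apply: le_trans (_ : expR (- (x / (1 - x))) <= _).
  rewrite ler_expR lerN2 ler_pdivrMr // expr2.
  have : 0 <= x * x * (1 - 2 * x) by rewrite !mulr_ge0 //; lra.
  nra.
by rewrite expRN -[X in _ <= X]invrK lef_pV2 ?posrE ?invr_gt0 ?expR_gt0.
Qed.

Lemma expR_delta (C x : R) (r : nat) : 0 < C ->
  expR (- r%:R) * expR (- (delta C + x) * r%:R) = C ^+ r * expR (- (C + x) * r%:R).
Proof.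
move=> C_gt0; rewrite -[C in C ^+ r]lnK ?posrE // -expRM_natl -!expRD /delta.
by congr expR; ring.
Qed.

End Exponential.

Lemma bin_le_exp_div_fact (R : numFieldType) n k :
  'C(n, k)%:R <= n%:R ^+ k / k`!%:R :> R.
Proof.
rewrite ler_pdivlMr ?ltr0n ?fact_gt0 // -natrM bin_ffact -natrX ler_nat.
rewrite ffact_prod -[X in (_ <= _ ^ X)%N](card_ord k) -prod_nat_const.
by rewrite leq_prod // => i _; apply: leq_subr.
Qed.

Lemma exp_div_fact_le_bin (R : numFieldType) n k :
  (n - k)%:R ^+ k / k`!%:R <= 'C(n, k)%:R :> R.
Proof.
rewrite ler_pdivrMr ?ltr0n ?fact_gt0 // -natrM bin_ffact -natrX ler_nat.
rewrite ffact_prod -[X in (_ ^ X <= _)%N](card_ord k) -prod_nat_const leq_prod // => i _.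
exact/leq_sub2l/ltnW.
Qed.

Lemma leq_of_ler_eps_mul (R : numDomainType) (eps : R) (n r : nat) :
  eps <= 1 -> r%:R <= eps * n%:R -> (r <= n)%N.
Proof. by move=> eps_le1 r_le; rewrite -(ler_nat R) (le_trans r_le) // ler_piMl. Qed.

Lemma pow_1B_div_le_expR (R : realType) (x eps : R) (n r : nat) :
  0 <= x <= n%:R -> r%:R <= eps * n%:R -> (0 < r <= n)%N ->
  (1 - x / n%:R) ^+ (r * (n - r)) <= expR (- (x * (1 - eps) * r%:R)).
Proof.
move=> /andP[x_ge0 x_le] r_le /andP[r_gt0 r_le_n].
have N_gt0 : 0 < n%:R :> R by rewrite ltr0n (leq_trans r_gt0).
apply: le_trans (pow_1B_le_expR _ _) _; first by rewrite ler_pdivrMr // mul1r.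
rewrite ler_expR lerN2 natrM natrB // mulrAC.
rewrite [X in _ <= X](_ : _ = x * r%:R * ((n%:R - r%:R) / n%:R)); last by field; rewrite gt_eqF.
by rewrite ler_wpM2l ?mulr_ge0 ?ler0n // ler_pdivlMr // mulrBl mul1r; lra.
Qed.

Lemma upper_target_eq (R : realType) (C eps om Tn : R) (r : nat) : 0 < C -> (0 < r)%N ->
  Tn * expR (- r%:R) / (C * (r.-1)`!%:R) * expR (- (delta C - C * eps - om) * r%:R)
  = C ^+ r.-1 / (r.-1)`!%:R * expR ((C * eps + om - C) * r%:R) * Tn.
Proof.
move=> C_gt0 r_gt0; have kf_gt0 : 0 < (r.-1)`!%:R :> R by rewrite ltr0n fact_gt0.
rewrite (_ : delta C - C * eps - om = delta C + (- (C * eps) - om)); last by ring.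
rewrite mulrAC -(mulrA Tn) expR_delta // -(prednK r_gt0) exprS prednK //.
rewrite (_ : - (C + (- (C * eps) - om)) = C * eps + om - C); last by ring.
by field; rewrite !gt_eqF.
Qed.

Lemma bin_mul_pow_le (R : realType) (C al : R) (k n : nat) : 0 < C -> 0 <= al -> (0 < n)%N ->
  'C(n.-1, k)%:R * ((C + al) / n%:R) ^+ k <= C ^+ k * expR (k%:R * (al / C)) / k`!%:R.
Proof.
move=> C_gt0 al_ge0 n_gt0.
have N_gt0 : 0 < n%:R :> R by rewrite ltr0n.
have kf_gt0 : 0 < k`!%:R :> R by rewrite ltr0n fact_gt0.
have n1_le : (n.-1)%:R ^+ k <= n%:R ^+ k :> R.
  by rewrite lerXn2r ?nnegrE ?ler0n // ler_nat leq_pred.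
apply: le_trans (ler_wpM2r _ (le_trans (bin_le_exp_div_fact _ _ _) (ler_wpM2r _ n1_le))) _.
- by apply/exprn_ge0/divr_ge0; [lra | exact: ler0n].
- by rewrite invr_ge0 ltW.
rewrite expr_div_n [X in X <= _]mulrAC mulrCA divff ?mulr1 ?gt_eqF ?exprn_gt0 //.
by apply: ler_wpM2r; [rewrite invr_ge0 ltW | apply: pow_le_expR].
Qed.

Lemma upper_estimate (R : realType) (C al eps om : R) (n r : nat) :
  0 < C -> 0 <= al <= C -> 0 < eps < 1 -> al / C + al <= om -> C <= n%:R ->
  (0 < r)%N -> r%:R <= eps * n%:R ->
  'C(n.-1, r.-1)%:R * (T r)%:R *
    (((C + al) / n%:R) ^+ r.-1 * (1 - (C - al) / n%:R) ^+ (r * (n - r)))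
  <= (T r)%:R * expR (- r%:R) / (C * (r.-1)`!%:R) * expR (- (delta C - C * eps - om) * r%:R).
Proof.
move=> C_gt0 /andP[al_ge0 al_le] /andP[eps_gt0 eps_lt1] al_small C_le r_gt0 r_le.
have r_le_n := leq_of_ler_eps_mul (ltW eps_lt1) r_le.
have N_gt0 : 0 < n%:R :> R by rewrite ltr0n (leq_trans r_gt0).
have kf_gt0 : 0 < (r.-1)`!%:R :> R by rewrite ltr0n fact_gt0.
have binom := bin_mul_pow_le r.-1 C_gt0 al_ge0 (leq_trans r_gt0 r_le_n).
have isolated := @pow_1B_div_le_expR R (C - al) eps n r.
rewrite upper_target_eq // mulrAC mulrA; apply: ler_wpM2r; first exact: ler0n.
apply: le_trans (ler_pM _ _ binom (isolated _ r_le _)) _; rewrite ?r_gt0 ?r_le_n //.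
- by apply: mulr_ge0; [exact: ler0n | apply/exprn_ge0/divr_ge0; [lra | exact: ler0n]].
- by apply: exprn_ge0; rewrite subr_ge0 ler_pdivrMr // mul1r; lra.
- by apply/andP; split; lra.
rewrite (mulrAC (C ^+ _)) -(mulrA (C ^+ _ / _)) -expRD.
apply: ler_wpM2l; first by rewrite divr_ge0 ?exprn_ge0 ?ltW.
have rr_k : r%:R = (r.-1)%:R + 1 :> R by rewrite natr1 prednK.
have : 0 <= (r%:R - (r.-1)%:R) * (al / C) by rewrite mulr_ge0 ?divr_ge0 //; lra.
have : 0 <= al * eps * r%:R by rewrite !mulr_ge0 ?ler0n //; lra.
have : 0 <= (om - (al / C + al)) * r%:R by rewrite mulr_ge0 ?ler0n //; lra.
rewrite ler_expR; lra.
Qed.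

Lemma lower_target_eq (R : realType) (C eps om Tn : R) (r : nat) :
  0 < C -> 0 < eps < 1 -> (0 < r)%N ->
  1 / (C * (1 - eps)) * (Tn * expR (- r%:R) / (r.-1)`!%:R)
    * expR (- (delta C - ln (1 - eps) + om) * r%:R) * expR (- (2 * eps) + 2 * om / 3)
  = (C * (1 - eps)) ^+ r.-1 / (r.-1)`!%:R
    * expR (- (C + om) * r%:R - 2 * eps + 2 * om / 3) * Tn.
Proof.
move=> C_gt0 /andP[eps_gt0 eps_lt1] r_gt0.
have kf_gt0 : 0 < (r.-1)`!%:R :> R by rewrite ltr0n fact_gt0.
have E : expR (- r%:R) * expR (- (delta C - ln (1 - eps) + om) * r%:R) =
    (C * (1 - eps)) ^+ r * expR (- (C + om) * r%:R).
  rewrite (_ : delta C - ln (1 - eps) + om = delta C + (om - ln (1 - eps))); last by ring.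
  rewrite expR_delta //.
  rewrite (_ : - (C + (om - ln (1 - eps))) * r%:R = - (C + om) * r%:R + r%:R * ln (1 - eps)).
    by rewrite expRD expRM_natl lnK ?posrE ?subr_gt0 // exprMn; ring.
  by ring.
transitivity (Tn / (r.-1)`!%:R / (C * (1 - eps)) *
    (expR (- r%:R) * expR (- (delta C - ln (1 - eps) + om) * r%:R)) *
    expR (- (2 * eps) + 2 * om / 3)).
  by ring.
rewrite E (_ : - (C + om) * r%:R - 2 * eps + 2 * om / 3 =
  - (C + om) * r%:R + (- (2 * eps) + 2 * om / 3)).
  rewrite [in RHS]expRD -(prednK r_gt0) exprS prednK //.
  by field; rewrite !gt_eqF ?mulr_gt0 ?subr_gt0.
by ring.
Qed.

Lemma bin_mul_pow_ge (R : realType) (C al eps : R) (n r : nat) :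
  0 < C -> 0 <= al <= C / 2 -> 0 < eps < 1 -> (0 < r)%N -> r%:R <= eps * n%:R ->
  (C * (1 - eps)) ^+ r.-1 / (r.-1)`!%:R * expR (- ((r.-1)%:R * (al / C + 2 * (al / C) ^+ 2)))
  <= 'C(n.-1, r.-1)%:R * ((C - al) / n%:R) ^+ r.-1.
Proof.
move=> C_gt0 /andP[al_ge0 al_le] /andP[eps_gt0 eps_lt1] r_gt0 r_le.
have r_le_n := leq_of_ler_eps_mul (ltW eps_lt1) r_le.
have N_gt0 : 0 < n%:R :> R by rewrite ltr0n (leq_trans r_gt0).
have kf_gt0 : 0 < (r.-1)`!%:R :> R by rewrite ltr0n fact_gt0.
have x_ge0 : 0 <= al / C by rewrite divr_ge0 //; lra.
have x_le : al / C <= 1 / 2 by rewrite ler_pdivrMr //; lra.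
have frac : 1 - eps <= (n - r)%:R / n%:R.
  by rewrite natrB // ler_pdivlMr // mulrBl mul1r; lra.
apply: le_trans (ler_wpM2r _ (exp_div_fact_le_bin _ _ _)); last first.
  by apply/exprn_ge0/divr_ge0; [lra | exact: ler0n].
rewrite (_ : (n.-1 - r.-1)%N = (n - r)%N); last by rewrite -predn_sub -subnS prednK.
rewrite [X in X <= _](_ : _ = (1 - eps) ^+ r.-1 *
    (C ^+ r.-1 * expR (- ((r.-1)%:R * (al / C + 2 * (al / C) ^+ 2)))) / (r.-1)`!%:R).
  rewrite [X in _ <= X](_ : _ = ((n - r)%:R / n%:R) ^+ r.-1 * (C - al) ^+ r.-1 / (r.-1)`!%:R).
    apply: ler_wpM2r; first by rewrite invr_ge0 ltW.
    apply: ler_pM.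
    - by apply: exprn_ge0; lra.
    - by apply: mulr_ge0; [apply/exprn_ge0/ltW | apply: expR_ge0].
    - by apply: lerXn2r; rewrite // nnegrE; lra.
    rewrite (_ : C - al = C * (1 - al / C)); last by field; rewrite gt_eqF.
    rewrite [X in _ <= X]exprMn; apply: ler_wpM2l; first by apply/exprn_ge0/ltW.
    by rewrite expR_le_pow_1B ?x_ge0.
  by rewrite !expr_div_n; field; rewrite !gt_eqF ?exprn_gt0.
by rewrite exprMn; ring.
Qed.

Lemma lower_estimate (R : realType) (C al eps om : R) (n r : nat) :
  0 < C -> 0 <= al <= C / 2 -> 0 < eps < 1 -> 0 < om -> 2 * (C + al) <= n%:R ->
  2 * (al / C) + al + 2 * ((C + al) / n%:R) * (C + al) <= om / 3 ->
  (0 < r)%N -> r%:R <= eps * n%:R ->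
  1 / (C * (1 - eps)) * ((T r)%:R * expR (- r%:R) / (r.-1)`!%:R)
    * expR (- (delta C - ln (1 - eps) + om) * r%:R) * expR (- (2 * eps) + 2 * om / 3)
  <= 'C(n.-1, r.-1)%:R * (T r)%:R * (((C - al) / n%:R) ^+ r.-1 * (1 - (C + al) / n%:R) ^+ (r * n)).
Proof.
move=> C_gt0 /andP[al_ge0 al_le] eps01 om_gt0 N_ge small r_gt0 r_le.
have /andP[eps_gt0 eps_lt1] := eps01.
have r_le_n := leq_of_ler_eps_mul (ltW eps_lt1) r_le.
have N_gt0 : 0 < n%:R :> R by rewrite ltr0n (leq_trans r_gt0).
have kf_gt0 : 0 < (r.-1)`!%:R :> R by rewrite ltr0n fact_gt0.
have x_ge0 : 0 <= al / C by rewrite divr_ge0 //; lra.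
have x_le : al / C <= 1 / 2 by rewrite ler_pdivrMr //; lra.
have b_ge0 : 0 <= (C + al) / n%:R by rewrite divr_ge0 ?ler0n //; lra.
have b_le : (C + al) / n%:R <= 1 / 2 by rewrite ler_pdivrMr //; lra.
have binom := bin_mul_pow_ge C_gt0 (introT andP (conj al_ge0 al_le)) eps01 r_gt0 r_le.
have factor_ge0 : 0 <= (C * (1 - eps)) ^+ r.-1 / (r.-1)`!%:R.
  by apply: divr_ge0; [apply: exprn_ge0; apply: mulr_ge0; lra | exact: ltW].
have edges := @expR_le_pow_1B R ((C + al) / n%:R) (r * n).
have rn_b : (r * n)%:R * ((C + al) / n%:R + 2 * ((C + al) / n%:R) ^+ 2) =
    r%:R * (C + al) * (1 + 2 * ((C + al) / n%:R)).
  by rewrite natrM; field; rewrite gt_eqF.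
rewrite lower_target_eq // [X in _ <= X]mulrAC [in X in _ <= X]mulrA.
apply: ler_wpM2r; first exact: ler0n.
apply: le_trans (ler_pM _ _ binom (edges _)); rewrite ?b_ge0 ?b_le ?expR_ge0 //; last first.
  by apply: mulr_ge0; [exact: factor_ge0 | exact: expR_ge0].
rewrite -(mulrA (_ / _)) -expRD; apply: ler_wpM2l; first exact: factor_ge0.
rewrite ler_expR rn_b.
have rr_k : r%:R = (r.-1)%:R + 1 :> R by rewrite natr1 prednK.
have : 0 <= (r.-1)%:R * (al / C * (1 - 2 * (al / C))).
  by apply: mulr_ge0; [exact: ler0n | apply: mulr_ge0; lra].
have : 0 <= (r%:R - (r.-1)%:R) * (2 * (al / C)) by apply: mulr_ge0; lra.
have : 0 <= r%:R * (om / 3 - (2 * (al / C) + al + 2 * ((C + al) / n%:R) * (C + al))).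
  by rewrite mulr_ge0 ?ler0n // subr_ge0.
have : 0 <= (r%:R - 1) * om by apply: mulr_ge0; rewrite ?subr_ge0 ?ler1n //; lra.
rewrite expr2; lra.
Qed.

Lemma small_parameters (R : realFieldType) (C om al N : R) :
  0 < C -> 0 < om -> 0 <= al -> al < C / 2 -> al < om / (6 * (2 / C + 1)) ->
  3 * C <= N -> 27 * C ^+ 2 / om <= N ->
  [/\ al <= C / 2, al / C + al <= om, C <= N, 2 * (C + al) <= N &
      2 * (al / C) + al + 2 * ((C + al) / N) * (C + al) <= om / 3].
Proof.
move=> C_gt0 om_gt0 al_ge0 al_C al_om N_ge1 N_ge2.
have c_gt0 : 0 < 2 / C + 1 by have := divr_gt0 (ltr0Sn R 1) C_gt0; lra.
have x_ge0 : 0 <= al / C by rewrite divr_ge0 //; lra.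
have al_small : 2 * (al / C) + al <= om / 6.
  move: al_om; rewrite ltr_pdivlMr ?mulr_gt0 // => al_om.
  rewrite (_ : 2 * (al / C) + al = al * (2 / C + 1)); last by field; rewrite gt_eqF.
  by rewrite ler_pdivlMr //; lra.
have N_gt0 : 0 < N by have := mulr_gt0 (ltr0Sn R 2) C_gt0; lra.
have edge_small : 2 * ((C + al) / N) * (C + al) <= om / 6.
  have sq : (C + al) ^+ 2 <= 9 / 4 * C ^+ 2.
    have : 0 <= (C / 2 - al) * (5 / 2 * C + al) by apply: mulr_ge0; lra.
    rewrite !expr2; nra.
  rewrite (_ : 2 * ((C + al) / N) * (C + al) = 2 * (C + al) ^+ 2 / N).
    by move: N_ge2; rewrite !ler_pdivrMr //; lra.
  by rewrite expr2; field; rewrite gt_eqF.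
by split; lra.
Qed.

Local Open Scope classical_set_scope.
Local Open Scope ring_scope.

Theorem lemma1 (R : realType) (C : R) (alpha : nat -> R)
  (p : forall n : nat, edge n -> R)
  (hC : 0 < C) (hC1 : C != 1)
  (halpha0 : forall n, 0 <= alpha n)
  (halpha : alpha @ \oo --> (0 : R))
  (hp01 : forall n (e : edge n), 0 <= p n e <= 1)
  (hp : forall n (e : edge n),
     (C - alpha n) / n%:R <= p n e <= (C + alpha n) / n%:R)
  (eps omega : R) (heps : 0 < eps < 1) (homega : 0 < omega)
  (hdelta0 : 0 < delta C - C * eps - omega) :
  exists N : nat, (0 < N)%N /\
  forall n : nat, (N <= n)%N -> forall (i : 'I_n) (r : nat),
    (1 <= r)%N -> r%:R <= eps * n%:R ->
    prob_comp_size (p n) i r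
      <= (T r)%:R * expR (- r%:R) / (C * (r.-1)`!%:R)
         * expR (- (delta C - C * eps - omega) * r%:R)
    /\
    1 / (C * (1 - eps)) * ((T r)%:R * expR (- r%:R) / (r.-1)`!%:R)
      * expR (- (delta C - ln (1 - eps) + omega) * r%:R)
      * expR (- (2 * eps) + 2 * omega / 3)
      <= prob_comp_size (p n) i r.
Proof.
have th1 : 0 < C / 2 by lra.
have th2 : 0 < omega / (6 * (2 / C + 1)).
  by rewrite divr_gt0 // mulr_gt0 // addr_gt0 ?divr_gt0.
have [N0 _ large] : \forall n \near \oo, [/\ alpha n < C / 2,
    alpha n < omega / (6 * (2 / C + 1)), 3 * C <= n%:R & 27 * C ^+ 2 / omega <= n%:R].
  near=> n; split; near: n; by [apply: cvgr_lt halpha _ th1 | apply: cvgr_lt halpha _ th2 |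
    apply: nbhs_infty_ger].
exists N0.+1; split=> // n n_ge i r r_gt0 r_le.
have [al_C al_om N_ge1 N_ge2] := large n (ltnW n_ge).
have [al_le al_small C_le N_ge small] :=
  small_parameters hC homega (halpha0 n) al_C al_om N_ge1 N_ge2.
have N_gt0 : 0 < n%:R :> R by apply: lt_le_trans C_le.
have a_ge0 : 0 <= (C - alpha n) / n%:R by rewrite divr_ge0 ?ler0n //; lra.
have a_le_b : (C - alpha n) / n%:R <= (C + alpha n) / n%:R.
  by rewrite ler_pdivrMr // divfK ?gt_eqF //; have := halpha0 n; lra.
have b_le1 : (C + alpha n) / n%:R <= 1 by rewrite ler_pdivrMr // mul1r; lra.
split.
  apply: le_trans (prob_comp_size_le i (hp n) a_ge0 a_le_b b_le1 r_gt0) _.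
  by apply: upper_estimate; rewrite ?heps ?halpha0 //; lra.
apply: le_trans (prob_comp_size_ge i (hp n) a_ge0 a_le_b b_le1 r_gt0).
by apply: lower_estimate; rewrite ?heps ?halpha0 ?al_le.
Unshelve. all: by end_near.
Qed.
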